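(* Let $(\mathbb{X}, \otimes, K)$ be a differential category with coalgebra modality $(!, \delta, \varepsilon, \Delta, \mathsf{e})$ and deriving transformation $\mathsf{d}_A:!(A)\otimes A\to !(A)$, and let $(\mathsf{T}, \mu, \eta, \mathsf{n}, \mathsf{n}_{K})$ be a symmetric comonoidal monad on $(\mathbb{X}, \otimes, K)$ whose underlying endofunctor is additive. Then the following are in bijective correspondence: (1) Differential mixed distributive laws of $(\mathsf{T}, \mu, \eta, \mathsf{n}, \mathsf{n}_{K})$ over $(!, \delta, \varepsilon, \Delta, \mathsf{e}, \mathsf{d})$; (2) Liftings of $\mathsf{d}$ to $(\mathbb{X}^\mathsf{T}, \otimes^{\mathsf{n}}, (K,\mathsf{n}_K))$, that is, deriving transformations $\tilde{\mathsf{d}}$ for the lifted coalgebra modality $(\tilde{!}, \tilde{\delta}, \tilde{\varepsilon}, \tilde{\Delta}, \tilde{\mathsf{e}})$ on $(\mathbb{X}^\mathsf{T}, \otimes^{\mathsf{n}}, (K,\mathsf{n}_K))$ induced by the corresponding coalgebra mixed distributive law, such that for every $\mathsf{T}$-algebra $(A, \nu)$ the underlying map of $\tilde{\mathsf{d}}_{(A, \nu)}$ is $\mathsf{d}_A$. Consequently, if $\lambda$ is a differential mixed distributive law, then $(\mathbb{X}^\mathsf{T}, \otimes^{\mathsf{n}}, (K,\mathsf{n}_K))$ is a differential category with coalgebra modality $(\tilde{!}, \tilde{\delta}, \tilde{\varepsilon}, \tilde{\Delta}, \tilde{\mathsf{e}})$ and deriving transformation $\tilde{\mathsf{d}}$.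
   Context: Composition is in diagrammatic order. An additive symmetric monoidal category has hom-sets that are commutative monoids with composition and $\otimes$ preserving $+$ and $0$; an additive functor preserves $+$ and $0$ strictly. A differential category is an additive symmetric monoidal category with a coalgebra modality $(!,\delta,\varepsilon,\Delta,\mathsf{e})$ (a comonad with natural cocommutative comonoids $(!(A),\Delta_A,\mathsf{e}_A)$ such that $\delta_A$ is a comonoid morphism) and a deriving transformation $\mathsf{d}_A:!(A)\otimes A\to!(A)$ satisfying the axioms of Blute, Cockett and Seely. A symmetric comonoidal monad $(\mathsf{T},\mu,\eta,\mathsf{n},\mathsf{n}_K)$ has oplax structure $\mathsf{n}_{A,B}:\mathsf{T}(A\otimes B)\to\mathsf{T}(A)\otimes\mathsf{T}(B)$, $\mathsf{n}_K:\mathsf{T}(K)\to K$; $\mathbb{X}^\mathsf{T}$ has $(A,\nu)\otimes^\mathsf{n}(B,\nu')=(A\otimes B,\mathsf{n}_{A,B};(\nu\otimes\nu'))$ and unit $(K,\mathsf{n}_K)$, and is additive symmetric monoidal when $\mathsf{T}$ is additive. A coalgebra mixed distributive law is a natural $\lambda_A:\mathsf{T}!(A)\to!\mathsf{T}(A)$ with $\mu_{!(A)};\lambda_A=\mathsf{T}(\lambda_A);\lambda_{\mathsf{T}(A)};!(\mu_A)$, $\eta_{!(A)};\lambda_A=!(\eta_A)$, $\mathsf{T}(\delta_A);\lambda_{!(A)};!(\lambda_A)=\lambda_A;\delta_{\mathsf{T}(A)}$, $\lambda_A;\varepsilon_{\mathsf{T}(A)}=\mathsf{T}(\varepsilon_A)$,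 $\mathsf{T}(\Delta_A);\mathsf{n}_{!(A),!(A)};(\lambda_A\otimes\lambda_A)=\lambda_A;\Delta_{\mathsf{T}(A)}$, $\mathsf{T}(\mathsf{e}_A);\mathsf{n}_K=\lambda_A;\mathsf{e}_{\mathsf{T}(A)}$; it lifts the coalgebra modality via $\tilde{!}(A,\nu)=(!(A),\lambda_A;!(\nu))$. It is a differential mixed distributive law if moreover $\mathsf{n}_{!(A),A};(\lambda_A\otimes1_{\mathsf{T}(A)});\mathsf{d}_{\mathsf{T}(A)}=\mathsf{T}(\mathsf{d}_A);\lambda_A$. *)

From Stdlib Require Import ProofIrrelevance.
Set Implicit Arguments.
Unset Strict Implicit.

Record SMCOps : Type := {
  obj :> Type;
  hom : obj -> obj -> Type;
  idm : forall A, hom A A;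
  comp : forall A B C, hom A B -> hom B C -> hom A C;
  addm : forall A B, hom A B -> hom A B -> hom A B;
  zerom : forall A B, hom A B;
  tens : obj -> obj -> obj;
  tensm : forall A B C D, hom A B -> hom C D -> hom (tens A C) (tens B D);
  unitO : obj;
  asc : forall A B C, hom (tens (tens A B) C) (tens A (tens B C));
  asci : forall A B C, hom (tens A (tens B C)) (tens (tens A B) C);
  lu : forall A, hom (tens unitO A) A;
  lui : forall A, hom A (tens unitO A);
  ru : forall A, hom (tens A unitO) A;
  rui : forall A, hom A (tens A unitO);
  sym : forall A B, hom (tens A B) (tens B A) }.

Arguments hom {_} A B.
Arguments idm {_} A.
Arguments comp {_ A B C} f g.
Arguments addm {_ A B} f g.
Arguments zerom {_} A B.
Arguments tens {_} A B.
Arguments tensm {_ A B C D} f g.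
Arguments unitO : clear implicits.
Arguments asc {_} A B C.
Arguments asci {_} A B C.
Arguments lu {_} A.
Arguments lui {_} A.
Arguments ru {_} A.
Arguments rui {_} A.
Arguments sym {_} A B.

Infix ";;" := comp (at level 40, left associativity).

Record is_additive_smc (X : SMCOps) : Prop := {
  c_idl : forall (A B : X) (f : hom A B), idm A ;; f = f;
  c_idr : forall (A B : X) (f : hom A B), f ;; idm B = f;
  c_assoc : forall (A B C D : X) (f : hom A B) (g : hom B C) (h : hom C D),
      f ;; g ;; h = f ;; (g ;; h);
  a_assoc : forall (A B : X) (f g h : hom A B), addm (addm f g) h = addm f (addm g h);
  a_comm : forall (A B : X) (f g : hom A B), addm f g = addm g f;
  a_zero : forall (A B : X) (f : hom A B), addm f (zerom A B) = f;
  c_addl : forall (A B C : X) (f g : hom A B) (h : hom B C),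
      addm f g ;; h = addm (f ;; h) (g ;; h);
  c_addr : forall (A B C : X) (h : hom A B) (f g : hom B C),
      h ;; addm f g = addm (h ;; f) (h ;; g);
  c_zerol : forall (A B C : X) (h : hom B C), zerom A B ;; h = zerom A C;
  c_zeror : forall (A B C : X) (h : hom A B), h ;; zerom B C = zerom A C;
  t_id : forall A B : X, tensm (idm A) (idm B) = idm (tens A B);
  t_comp : forall (A1 A2 A3 B1 B2 B3 : X) (f : hom A1 A2) (f' : hom A2 A3)
      (g : hom B1 B2) (g' : hom B2 B3), tensm (f ;; f') (g ;; g') = tensm f g ;; tensm f' g';
  t_addl : forall (A B C D : X) (f f' : hom A B) (g : hom C D),
      tensm (addm f f') g = addm (tensm f g) (tensm f' g);
  t_addr : forall (A B C D : X) (f : hom A B) (g g' : hom C D),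
      tensm f (addm g g') = addm (tensm f g) (tensm f g');
  t_zerol : forall (A B C D : X) (g : hom C D), tensm (zerom A B) g = zerom (tens A C) (tens B D);
  t_zeror : forall (A B C D : X) (f : hom A B), tensm f (zerom C D) = zerom (tens A C) (tens B D);
  asc_iso1 : forall A B C : X, asc A B C ;; asci A B C = idm _;
  asc_iso2 : forall A B C : X, asci A B C ;; asc A B C = idm _;
  lu_iso1 : forall A : X, lu A ;; lui A = idm _;
  lu_iso2 : forall A : X, lui A ;; lu A = idm _;
  ru_iso1 : forall A : X, ru A ;; rui A = idm _;
  ru_iso2 : forall A : X, rui A ;; ru A = idm _;
  sym_inv : forall A B : X, sym A B ;; sym B A = idm _;
  asc_nat : forall (A1 A2 A3 B1 B2 B3 : X) (f : hom A1 B1) (g : hom A2 B2) (h : hom A3 B3),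
      tensm (tensm f g) h ;; asc B1 B2 B3 = asc A1 A2 A3 ;; tensm f (tensm g h);
  lu_nat : forall (A B : X) (f : hom A B), tensm (idm (unitO X)) f ;; lu B = lu A ;; f;
  ru_nat : forall (A B : X) (f : hom A B), tensm f (idm (unitO X)) ;; ru B = ru A ;; f;
  sym_nat : forall (A B C D : X) (f : hom A B) (g : hom C D),
      tensm f g ;; sym B D = sym A C ;; tensm g f;
  pentagon : forall A B C D : X,
      tensm (asc A B C) (idm D) ;; asc A (tens B C) D ;; tensm (idm A) (asc B C D)
      = asc (tens A B) C D ;; asc A B (tens C D);
  triangle : forall A B : X,
      asc A (unitO X) B ;; tensm (idm A) (lu B) = tensm (ru A) (idm B);
  hexagon : forall A B C : X,
      asc A B C ;; sym A (tens B C) ;; asc B C A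
      = tensm (sym A B) (idm C) ;; asc B A C ;; tensm (idm B) (sym A C) }.

Record CMOps (X : SMCOps) : Type := {
  bang : X -> X;
  bangm : forall A B : X, hom A B -> hom (bang A) (bang B);
  dlt : forall A : X, hom (bang A) (bang (bang A));
  eps : forall A : X, hom (bang A) A;
  cmul : forall A : X, hom (bang A) (tens (bang A) (bang A));
  cu : forall A : X, hom (bang A) (unitO X) }.
Arguments bang {_} _ A.
Arguments bangm {_} _ {A B} f.
Arguments dlt {_} _ A.
Arguments eps {_} _ A.
Arguments cmul {_} _ A.
Arguments cu {_} _ A.

Record is_coalg_modality (X : SMCOps) (M : CMOps X) : Prop := {
  bang_id : forall A : X, bangm M (idm A) = idm (bang M A);
  bang_comp : forall (A B C : X) (f : hom A B) (g : hom B C),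
      bangm M (f ;; g) = bangm M f ;; bangm M g;
  dlt_nat : forall (A B : X) (f : hom A B), bangm M f ;; dlt M B = dlt M A ;; bangm M (bangm M f);
  eps_nat : forall (A B : X) (f : hom A B), bangm M f ;; eps M B = eps M A ;; f;
  cmnd_assoc : forall A : X, dlt M A ;; dlt M (bang M A) = dlt M A ;; bangm M (dlt M A);
  cmnd_unitl : forall A : X, dlt M A ;; eps M (bang M A) = idm _;
  cmnd_unitr : forall A : X, dlt M A ;; bangm M (eps M A) = idm _;
  cmul_nat : forall (A B : X) (f : hom A B),
      bangm M f ;; cmul M B = cmul M A ;; tensm (bangm M f) (bangm M f);
  cu_nat : forall (A B : X) (f : hom A B), bangm M f ;; cu M B = cu M A;
  cmul_assoc : forall A : X,
      cmul M A ;; tensm (cmul M A) (idm _) ;; asc _ _ _ = cmul M A ;; tensm (idm _) (cmul M A);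
  cmul_unitl : forall A : X, cmul M A ;; tensm (cu M A) (idm _) ;; lu _ = idm _;
  cmul_unitr : forall A : X, cmul M A ;; tensm (idm _) (cu M A) ;; ru _ = idm _;
  cmul_comm : forall A : X, cmul M A ;; sym _ _ = cmul M A;
  dlt_cmul : forall A : X, dlt M A ;; cmul M (bang M A) = cmul M A ;; tensm (dlt M A) (dlt M A);
  dlt_cu : forall A : X, dlt M A ;; cu M (bang M A) = cu M A }.

Definition DerivT (X : SMCOps) (M : CMOps X) := forall A : X, hom (tens (bang M A) A) (bang M A).

Record is_deriving (X : SMCOps) (M : CMOps X) (d : DerivT M) : Prop := {
  d_nat : forall (A B : X) (f : hom A B), tensm (bangm M f) f ;; d B = d A ;; bangm M f;
  d_const : forall A : X, d A ;; cu M A = zerom _ _;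
  d_leibniz : forall A : X,
      d A ;; cmul M A =
      addm (tensm (cmul M A) (idm A) ;; asc _ _ _ ;; tensm (idm _) (sym _ _) ;; asci _ _ _
              ;; tensm (d A) (idm _))
           (tensm (cmul M A) (idm A) ;; asc _ _ _ ;; tensm (idm _) (d A));
  d_linear : forall A : X, d A ;; eps M A = tensm (cu M A) (idm A) ;; lu A;
  d_chain : forall A : X,
      d A ;; dlt M A = tensm (cmul M A) (idm A) ;; asc _ _ _ ;; tensm (dlt M A) (d A)
                       ;; d (bang M A);
  d_interchange : forall A : X,
      tensm (d A) (idm A) ;; d A
      = asc _ _ _ ;; tensm (idm _) (sym A A) ;; asci _ _ _ ;; tensm (d A) (idm A) ;; d A }.

Record MOps (X : SMCOps) : Type := {
  Tob : X -> X;
  Tm : forall A B : X, hom A B -> hom (Tob A) (Tob B);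
  mu : forall A : X, hom (Tob (Tob A)) (Tob A);
  eta : forall A : X, hom A (Tob A);
  nn : forall A B : X, hom (Tob (tens A B)) (tens (Tob A) (Tob B));
  nK : hom (Tob (unitO X)) (unitO X) }.
Arguments Tob {_} _ A.
Arguments Tm {_} _ {A B} f.
Arguments mu {_} _ A.
Arguments eta {_} _ A.
Arguments nn {_} _ A B.
Arguments nK {_} _.

Record is_scm_monad (X : SMCOps) (T : MOps X) : Prop := {
  Tm_id : forall A : X, Tm T (idm A) = idm (Tob T A);
  Tm_comp : forall (A B C : X) (f : hom A B) (g : hom B C), Tm T (f ;; g) = Tm T f ;; Tm T g;
  mu_nat : forall (A B : X) (f : hom A B), Tm T (Tm T f) ;; mu T B = mu T A ;; Tm T f;
  eta_nat : forall (A B : X) (f : hom A B), f ;; eta T B = eta T A ;; Tm T f;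
  mu_assoc : forall A : X, Tm T (mu T A) ;; mu T A = mu T (Tob T A) ;; mu T A;
  mu_etal : forall A : X, eta T (Tob T A) ;; mu T A = idm _;
  mu_etar : forall A : X, Tm T (eta T A) ;; mu T A = idm _;
  nn_nat : forall (A B C D : X) (f : hom A B) (g : hom C D),
      Tm T (tensm f g) ;; nn T B D = nn T A C ;; tensm (Tm T f) (Tm T g);
  nn_asc : forall A B C : X,
      Tm T (asc A B C) ;; nn T A (tens B C) ;; tensm (idm _) (nn T B C)
      = nn T (tens A B) C ;; tensm (nn T A B) (idm _) ;; asc _ _ _;
  nn_lu : forall A : X, Tm T (lu A) = nn T (unitO X) A ;; tensm (nK T) (idm _) ;; lu _;
  nn_ru : forall A : X, Tm T (ru A) = nn T A (unitO X) ;; tensm (idm _) (nK T) ;; ru _;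
  nn_sym : forall A B : X, Tm T (sym A B) ;; nn T B A = nn T A B ;; sym _ _;
  mu_nn : forall A B : X,
      mu T (tens A B) ;; nn T A B = Tm T (nn T A B) ;; nn T _ _ ;; tensm (mu T A) (mu T B);
  mu_nK : mu T (unitO X) ;; nK T = Tm T (nK T) ;; nK T;
  eta_nn : forall A B : X, eta T (tens A B) ;; nn T A B = tensm (eta T A) (eta T B);
  eta_nK : eta T (unitO X) ;; nK T = idm _ }.

Record is_additive_functor (X : SMCOps) (T : MOps X) : Prop := {
  Tm_add : forall (A B : X) (f g : hom A B), Tm T (addm f g) = addm (Tm T f) (Tm T g);
  Tm_zero : forall A B : X, Tm T (zerom A B) = zerom _ _ }.

Definition MDL (X : SMCOps) (M : CMOps X) (T : MOps X) :=
  forall A : X, hom (Tob T (bang M A)) (bang M (Tob T A)).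

Record is_coalg_mdl (X : SMCOps) (M : CMOps X) (T : MOps X) (l : MDL M T) : Prop := {
  mdl_nat : forall (A B : X) (f : hom A B),
      Tm T (bangm M f) ;; l B = l A ;; bangm M (Tm T f);
  mdl_mu : forall A : X, mu T (bang M A) ;; l A = Tm T (l A) ;; l (Tob T A) ;; bangm M (mu T A);
  mdl_eta : forall A : X, eta T (bang M A) ;; l A = bangm M (eta T A);
  mdl_dlt : forall A : X,
      Tm T (dlt M A) ;; l (bang M A) ;; bangm M (l A) = l A ;; dlt M (Tob T A);
  mdl_eps : forall A : X, l A ;; eps M (Tob T A) = Tm T (eps M A);
  mdl_cmul : forall A : X,
      Tm T (cmul M A) ;; nn T _ _ ;; tensm (l A) (l A) = l A ;; cmul M (Tob T A);
  mdl_cu : forall A : X, Tm T (cu M A) ;; nK T = l A ;; cu M (Tob T A) }.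

Definition is_diff_mdl (X : SMCOps) (M : CMOps X) (T : MOps X) (d : DerivT M) (l : MDL M T)
  : Prop :=
  is_coalg_mdl l /\
  forall A : X, nn T (bang M A) A ;; tensm (l A) (idm (Tob T A)) ;; d (Tob T A)
                = Tm T (d A) ;; l A.

Lemma rc (X : SMCOps) (HX : is_additive_smc X) (A B C D : X)
  (f : hom A B) (g : hom B C) (h : hom A C) :
  f ;; g = h -> forall k : hom C D, f ;; (g ;; k) = h ;; k.
Proof. intros E k. rewrite <- (c_assoc HX). now rewrite E. Qed.

Record alg (X : SMCOps) (T : MOps X) : Type := {
  car : X;
  act : hom (Tob T car) car;
  act_unit : eta T car ;; act = idm car;
  act_mul : mu T car ;; act = Tm T act ;; act }.
Arguments car {X T} a.
Arguments act {X T} a.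

Definition alghom (X : SMCOps) (T : MOps X) (a b : alg T) : Type :=
  { f : hom (car a) (car b) | Tm T f ;; act b = act a ;; f }.

Section EMproofs.
Context (X : SMCOps) (HX : is_additive_smc X) (T : MOps X) (HT : is_scm_monad T)
        (HA : is_additive_functor T).

Lemma em_id_ok (a : alg T) : Tm T (idm (car a)) ;; act a = act a ;; idm (car a).
Proof. rewrite (Tm_id HT), (c_idl HX), (c_idr HX). reflexivity. Qed.

Lemma em_comp_ok (a b c : alg T) (f : alghom a b) (g : alghom b c) :
  Tm T (proj1_sig f ;; proj1_sig g) ;; act c = act a ;; (proj1_sig f ;; proj1_sig g).
Proof.
  destruct f as [f Hf], g as [g Hg]; simpl.
  rewrite (Tm_comp HT), (c_assoc HX), Hg, <- (c_assoc HX), Hf, (c_assoc HX). reflexivity.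
Qed.

Lemma em_add_ok (a b : alg T) (f g : alghom a b) :
  Tm T (addm (proj1_sig f) (proj1_sig g)) ;; act b = act a ;; addm (proj1_sig f) (proj1_sig g).
Proof.
  destruct f as [f Hf], g as [g Hg]; simpl.
  rewrite (Tm_add HA), (c_addl HX), (c_addr HX), Hf, Hg. reflexivity.
Qed.

Lemma em_zero_ok (a b : alg T) :
  Tm T (zerom (car a) (car b)) ;; act b = act a ;; zerom (car a) (car b).
Proof. rewrite (Tm_zero HA), (c_zerol HX), (c_zeror HX). reflexivity. Qed.

Lemma em_tens_unit (a b : alg T) :
  eta T (tens (car a) (car b)) ;; (nn T _ _ ;; tensm (act a) (act b)) = idm _.
Proof.
  rewrite <- (c_assoc HX), (eta_nn HT), <- (t_comp HX), !act_unit. apply (t_id HX).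
Qed.

Lemma em_tens_mul (a b : alg T) :
  mu T (tens (car a) (car b)) ;; (nn T _ _ ;; tensm (act a) (act b))
  = Tm T (nn T _ _ ;; tensm (act a) (act b)) ;; (nn T _ _ ;; tensm (act a) (act b)).
Proof.
  rewrite <- (c_assoc HX), (mu_nn HT), (c_assoc HX), <- (t_comp HX), !act_mul.
  rewrite (t_comp HX), (Tm_comp HT), !(c_assoc HX).
  rewrite (rc HX (nn_nat HT (act a) (act b))). rewrite !(c_assoc HX). reflexivity.
Qed.

Definition em_tens (a b : alg T) : alg T :=
  {| car := tens (car a) (car b); act := nn T _ _ ;; tensm (act a) (act b);
     act_unit := em_tens_unit a b; act_mul := em_tens_mul a b |}.

Definition em_unit : alg T :=
  {| car := unitO X; act := nK T; act_unit := eta_nK HT; act_mul := mu_nK HT |}.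

Lemma em_tensm_ok (a b c e : alg T) (f : alghom a b) (g : alghom c e) :
  Tm T (tensm (proj1_sig f) (proj1_sig g)) ;; act (em_tens b e)
  = act (em_tens a c) ;; tensm (proj1_sig f) (proj1_sig g).
Proof.
  destruct f as [f Hf], g as [g Hg]; simpl.
  rewrite <- (c_assoc HX), (nn_nat HT), (c_assoc HX), <- (t_comp HX), Hf, Hg.
  rewrite (t_comp HX), (c_assoc HX). reflexivity.
Qed.

Lemma inv_alg (a b : alg T) (f : hom (car a) (car b)) (g : hom (car b) (car a)) :
  Tm T f ;; act b = act a ;; f -> f ;; g = idm _ -> g ;; f = idm _ ->
  Tm T g ;; act a = act b ;; g.
Proof.
  intros Hf E1 E2.
  transitivity (Tm T g ;; (act a ;; f) ;; g).
  { rewrite (c_assoc HX), (c_assoc HX), E1, (c_idr HX). reflexivity. }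
  rewrite <- Hf, <- (c_assoc HX), <- (Tm_comp HT), E2, (Tm_id HT), (c_idl HX). reflexivity.
Qed.

Lemma em_asc_ok (a b c : alg T) :
  Tm T (asc (car a) (car b) (car c)) ;; act (em_tens a (em_tens b c))
  = act (em_tens (em_tens a b) c) ;; asc _ _ _.
Proof.
  simpl.
  rewrite <- (c_idl HX (act a)), (t_comp HX), (c_idl HX).
  rewrite <- !(c_assoc HX), (nn_asc HT), !(c_assoc HX), <- (asc_nat HX).
  rewrite (rc HX (eq_sym (t_comp HX (nn T (car a) (car b)) (tensm (act a) (act b))
                       (idm _) (act c)))).
  rewrite (c_idl HX). reflexivity.
Qed.

Lemma em_lu_ok (a : alg T) :
  Tm T (lu (car a)) ;; act a = act (em_tens em_unit a) ;; lu _.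
Proof.
  simpl. rewrite (nn_lu HT), !(c_assoc HX), <- (lu_nat HX).
  rewrite (rc HX (eq_sym (t_comp HX (nK T) (idm _) (idm _) (act a)))).
  rewrite (c_idr HX), (c_idl HX). reflexivity.
Qed.

Lemma em_ru_ok (a : alg T) :
  Tm T (ru (car a)) ;; act a = act (em_tens a em_unit) ;; ru _.
Proof.
  simpl. rewrite (nn_ru HT), !(c_assoc HX), <- (ru_nat HX).
  rewrite (rc HX (eq_sym (t_comp HX (idm _) (act a) (nK T) (idm _)))).
  rewrite (c_idr HX), (c_idl HX). reflexivity.
Qed.

Lemma em_sym_ok (a b : alg T) :
  Tm T (sym (car a) (car b)) ;; act (em_tens b a) = act (em_tens a b) ;; sym _ _.
Proof.
  simpl. rewrite <- (c_assoc HX), (nn_sym HT), !(c_assoc HX), (sym_nat HX). reflexivity.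
Qed.

Definition em_ops : SMCOps :=
  {| obj := alg T;
     hom := @alghom X T;
     idm := fun a => exist _ (idm (car a)) (em_id_ok a);
     comp := fun a b c f g => exist _ (proj1_sig f ;; proj1_sig g) (em_comp_ok f g);
     addm := fun a b f g => exist _ (addm (proj1_sig f) (proj1_sig g)) (em_add_ok f g);
     zerom := fun a b => exist _ (zerom (car a) (car b)) (em_zero_ok a b);
     tens := em_tens;
     tensm := fun a b c e f g =>
       exist _ (tensm (proj1_sig f) (proj1_sig g)) (em_tensm_ok f g);
     unitO := em_unit;
     asc := fun a b c => exist _ (asc _ _ _) (em_asc_ok a b c);
     asci := fun a b c => exist _ (asci _ _ _)
               (@inv_alg (em_tens (em_tens a b) c) (em_tens a (em_tens b c)) _ _ (em_asc_ok a b c) (asc_iso1 HX _ _ _) (asc_iso2 HX _ _ _));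
     lu := fun a => exist _ (lu _) (em_lu_ok a);
     lui := fun a => exist _ (lui _) (@inv_alg (em_tens em_unit a) a _ _ (em_lu_ok a) (lu_iso1 HX _) (lu_iso2 HX _));
     ru := fun a => exist _ (ru _) (em_ru_ok a);
     rui := fun a => exist _ (rui _) (@inv_alg (em_tens a em_unit) a _ _ (em_ru_ok a) (ru_iso1 HX _) (ru_iso2 HX _));
     sym := fun a b => exist _ (sym _ _) (em_sym_ok a b) |}.

End EMproofs.

Section Lifted.
Context (X : SMCOps) (HX : is_additive_smc X) (M : CMOps X) (HM : is_coalg_modality M)
        (T : MOps X) (HT : is_scm_monad T) (HA : is_additive_functor T)
        (l : MDL M T) (HL : is_coalg_mdl l).

Lemma lb_unit (a : alg T) : eta T (bang M (car a)) ;; (l (car a) ;; bangm M (act a)) = idm _.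
Proof.
  rewrite <- (c_assoc HX), (mdl_eta HL), <- (bang_comp HM), act_unit. apply (bang_id HM).
Qed.

Lemma lb_mul (a : alg T) :
  mu T (bang M (car a)) ;; (l (car a) ;; bangm M (act a))
  = Tm T (l (car a) ;; bangm M (act a)) ;; (l (car a) ;; bangm M (act a)).
Proof.
  rewrite <- (c_assoc HX), (mdl_mu HL), (c_assoc HX), <- (bang_comp HM), act_mul.
  rewrite (bang_comp HM), (Tm_comp HT), !(c_assoc HX).
  rewrite (rc HX (eq_sym (mdl_nat HL (act a)))). rewrite !(c_assoc HX). reflexivity.
Qed.

Definition lbang (a : alg T) : alg T :=
  {| car := bang M (car a); act := l (car a) ;; bangm M (act a);
     act_unit := lb_unit a; act_mul := lb_mul a |}.

Lemma lbangm_ok (a b : alg T) (f : alghom a b) :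
  Tm T (bangm M (proj1_sig f)) ;; act (lbang b) = act (lbang a) ;; bangm M (proj1_sig f).
Proof.
  destruct f as [f Hf]; simpl.
  rewrite <- (c_assoc HX), (mdl_nat HL), (c_assoc HX), <- !(bang_comp HM), Hf.
  rewrite (bang_comp HM), (c_assoc HX). reflexivity.
Qed.

Lemma ldlt_ok (a : alg T) :
  Tm T (dlt M (car a)) ;; act (lbang (lbang a)) = act (lbang a) ;; dlt M (car a).
Proof.
  simpl. rewrite (bang_comp HM), <- !(c_assoc HX), (mdl_dlt HL), !(c_assoc HX).
  rewrite (dlt_nat HM). reflexivity.
Qed.

Lemma leps_ok (a : alg T) :
  Tm T (eps M (car a)) ;; act a = act (lbang a) ;; eps M (car a).
Proof.
  simpl. rewrite (c_assoc HX), (eps_nat HM), <- (c_assoc HX), (mdl_eps HL). reflexivity.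
Qed.

Lemma lcmul_ok (a : alg T) :
  Tm T (cmul M (car a)) ;; act (em_tens HX HT (lbang a) (lbang a))
  = act (lbang a) ;; cmul M (car a).
Proof.
  simpl. rewrite (t_comp HX), <- !(c_assoc HX), (mdl_cmul HL), !(c_assoc HX).
  rewrite (cmul_nat HM). reflexivity.
Qed.

Lemma lcu_ok (a : alg T) :
  Tm T (cu M (car a)) ;; act (em_unit HT) = act (lbang a) ;; cu M (car a).
Proof.
  simpl. rewrite (c_assoc HX), (cu_nat HM), (mdl_cu HL). reflexivity.
Qed.

Definition lifted_modality : CMOps (em_ops HX HT HA) :=
  @Build_CMOps (em_ops HX HT HA) lbang
     (fun a b f => exist _ (bangm M (proj1_sig f)) (lbangm_ok f))
     (fun a => exist _ (dlt M (car a)) (ldlt_ok a))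
     (fun a => exist _ (eps M (car a)) (leps_ok a))
     (fun a => exist _ (cmul M (car a)) (lcmul_ok a))
     (fun a => exist _ (cu M (car a)) (lcu_ok a)).

End Lifted.

Definition is_lifting (X : SMCOps) (HX : is_additive_smc X) (M : CMOps X)
  (HM : is_coalg_modality M) (d : DerivT M) (T : MOps X) (HT : is_scm_monad T)
  (HA : is_additive_functor T) (l : MDL M T) (HL : is_coalg_mdl l)
  (dt : DerivT (lifted_modality HX HM HT HA HL)) : Prop :=
  is_deriving dt /\ forall a : alg T, proj1_sig (dt a) = d (car a).

(* The type of liftings of d (each together with the coalgebra mixed distributive
   law l, i.e. the lifting of the coalgebra modality, that it lives over). *)
Definition Lifting (X : SMCOps) (HX : is_additive_smc X) (M : CMOps X)
  (HM : is_coalg_modality M) (d : DerivT M) (T : MOps X) (HT : is_scm_monad T)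
  (HA : is_additive_functor T) : Type :=
  { l : MDL M T & { HL : is_coalg_mdl l &
      { dt : DerivT (lifted_modality HX HM HT HA HL) | @is_lifting X HX M HM d T HT HA l HL dt } } }.

(* The forgetful functor from X^T to X is faithful and the lifted modality has the
   structure maps of ! as underlying maps, so every axiom on X^T is the same axiom
   on X.  Hence a lifting of d, if it exists, is unique, and it exists exactly when
   every d_A is a T-algebra morphism !~(A, nu) (x)^n (A, nu) -> !~(A, nu).  By
   naturality of d and lambda it suffices to ask this of the free algebras
   (T A, mu_A), where, after precomposing with T(!(eta_A) (x) eta_A), it is the
   equation defining a differential mixed distributive law. *)
From Stdlib Require Import ProofIrrelevance FunctionalExtensionality.

Set Implicit Arguments.

Lemma proj1_sig_inj (A : Type) (P : A -> Prop) (x y : sig P) :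
  proj1_sig x = proj1_sig y -> x = y.
Proof. destruct x, y; simpl; apply subset_eq_compat. Qed.

Section LiftedDifferentialCategory.
Context (X : SMCOps) (M : CMOps X) (d : DerivT M) (T : MOps X)
  (HX : is_additive_smc X) (HM : is_coalg_modality M) (Hd : is_deriving d)
  (HT : is_scm_monad T) (HA : is_additive_functor T).

Lemma em_ops_additive_smc : is_additive_smc (em_ops HX HT HA).
Proof.
  constructor; intros; apply proj1_sig_inj; simpl;
  first [ apply (c_idl HX) | apply (c_idr HX) | apply (c_assoc HX) | apply (a_assoc HX)
        | apply (a_comm HX) | apply (a_zero HX) | apply (c_addl HX) | apply (c_addr HX)
        | apply (c_zerol HX) | apply (c_zeror HX) | apply (t_id HX) | apply (t_comp HX)
        | apply (t_addl HX) | apply (t_addr HX) | apply (t_zerol HX) | apply (t_zeror HX)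
        | apply (asc_iso1 HX) | apply (asc_iso2 HX) | apply (lu_iso1 HX) | apply (lu_iso2 HX)
        | apply (ru_iso1 HX) | apply (ru_iso2 HX) | apply (sym_inv HX) | apply (asc_nat HX)
        | apply (lu_nat HX) | apply (ru_nat HX) | apply (sym_nat HX) | apply (pentagon HX)
        | apply (triangle HX) | apply (hexagon HX) ].
Qed.

Lemma lifted_modality_coalg (l : MDL M T) (HL : is_coalg_mdl l) :
  is_coalg_modality (lifted_modality HX HM HT HA HL).
Proof.
  constructor; intros; apply proj1_sig_inj; simpl;
  first [ apply (bang_id HM) | apply (bang_comp HM) | apply (dlt_nat HM) | apply (eps_nat HM)
        | apply (cmnd_assoc HM) | apply (cmnd_unitl HM) | apply (cmnd_unitr HM)
        | apply (cmul_nat HM) | apply (cu_nat HM) | apply (cmul_assoc HM)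
        | apply (cmul_unitl HM) | apply (cmul_unitr HM) | apply (cmul_comm HM)
        | apply (dlt_cmul HM) | apply (dlt_cu HM) ].
Qed.

Definition free_alg (A : X) : alg T :=
  {| car := Tob T A; act := mu T A;
     act_unit := mu_etal HT A; act_mul := eq_sym (mu_assoc HT A) |}.

Section OverMixedDistributiveLaw.
Context (l : MDL M T) (HL : is_coalg_mdl l).

Definition d_is_alghom (a : alg T) : Prop :=
  Tm T (d (car a)) ;; act (lbang HX HM HT HL a)
  = act (em_tens HX HT (lbang HX HM HT HL a) a) ;; d (car a).

Definition diff_law_eq : Prop :=
  forall A : X, nn T (bang M A) A ;; tensm (l A) (idm (Tob T A)) ;; d (Tob T A)
                = Tm T (d A) ;; l A.

Lemma diff_law_d_is_alghom : diff_law_eq -> forall a : alg T, d_is_alghom a.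
Proof.
  intros Hdl a; unfold d_is_alghom; simpl.
  rewrite <- (c_assoc HX), <- Hdl, !(c_assoc HX), <- (d_nat Hd).
  rewrite <- (c_assoc HX (tensm _ _)), <- (t_comp HX), (c_idl HX).
  reflexivity.
Qed.

Lemma free_d_is_alghom_diff_law : (forall A : X, d_is_alghom (free_alg A)) -> diff_law_eq.
Proof.
  intros Hfree A.
  pose proof (Hfree A) as HfreeA; unfold d_is_alghom in HfreeA; simpl in HfreeA.
  pose (e := tensm (bangm M (eta T A)) (eta T A)).
  assert (Hunit : bangm M (Tm T (eta T A)) ;; bangm M (mu T A) = idm _).
  { rewrite <- (bang_comp HM), (mu_etar HT). apply (bang_id HM). }
  assert (Hleft : Tm T e ;; (Tm T (d (Tob T A)) ;; (l (Tob T A) ;; bangm M (mu T A)))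
                  = Tm T (d A) ;; l A).
  { unfold e. rewrite <- (c_assoc HX), <- (Tm_comp HT), (d_nat Hd), (Tm_comp HT).
    rewrite !(c_assoc HX), <- (c_assoc HX (Tm T (bangm M _))), (mdl_nat HL).
    rewrite (c_assoc HX), Hunit, (c_idr HX). reflexivity. }
  assert (Hright : Tm T e ;; (nn T _ _ ;; tensm (l (Tob T A) ;; bangm M (mu T A)) (mu T A)
                               ;; d (Tob T A))
                   = nn T (bang M A) A ;; tensm (l A) (idm (Tob T A)) ;; d (Tob T A)).
  { unfold e.
    rewrite <- !(c_assoc HX), (nn_nat HT), (c_assoc HX (nn T _ _)), <- (t_comp HX).
    rewrite <- (c_assoc HX), (mdl_nat HL), (c_assoc HX (l A)), Hunit, (c_idr HX).
    rewrite (mu_etar HT). reflexivity. }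
  rewrite <- Hright, <- Hleft, HfreeA. reflexivity.
Qed.

Definition lifted_d (Hdl : forall a : alg T, d_is_alghom a)
  : DerivT (lifted_modality HX HM HT HA HL) :=
  fun a => exist _ (d (car a)) (Hdl a).

Lemma lifted_d_deriving (Hdl : forall a : alg T, d_is_alghom a) :
  is_deriving (lifted_d Hdl).
Proof.
  constructor; intros; apply proj1_sig_inj; simpl;
  first [ apply (d_nat Hd) | apply (d_const Hd) | apply (d_leibniz Hd) | apply (d_linear Hd)
        | apply (d_chain Hd) | apply (d_interchange Hd) ].
Qed.

Lemma lifting_d_is_alghom (dt : DerivT (lifted_modality HX HM HT HA HL))
  (Hdt : forall a : alg T, proj1_sig (dt a) = d (car a)) (a : alg T) :
  d_is_alghom a.
Proof. unfold d_is_alghom. rewrite <- Hdt. exact (proj2_sig (dt a)). Qed.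

Lemma lifting_eq_lifted_d (dt : DerivT (lifted_modality HX HM HT HA HL))
  (Hdt : forall a : alg T, proj1_sig (dt a) = d (car a))
  (Hdl : forall a : alg T, d_is_alghom a) :
  dt = lifted_d Hdl.
Proof.
  apply functional_extensionality_dep. intros a.
  apply proj1_sig_inj. apply Hdt.
Qed.

End OverMixedDistributiveLaw.

Definition lifting_of_diff_law (x : { l : MDL M T | is_diff_mdl d l }) :
  @Lifting X HX M HM d T HT HA :=
  match x with
  | exist _ l (conj HL Hdl) =>
      let Halg := diff_law_d_is_alghom HL Hdl in
      existT _ l (existT _ HL
        (exist _ (lifted_d Halg) (conj (lifted_d_deriving Halg) (fun a => eq_refl))))
  end.

Definition diff_law_of_lifting (y : @Lifting X HX M HM d T HT HA) :
  { l : MDL M T | is_diff_mdl d l } :=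
  match y with
  | existT _ l (existT _ HL (exist _ dt (conj _ Hdt))) =>
      let Hfree A := lifting_d_is_alghom _ Hdt (free_alg A) in
      exist _ l (conj HL (free_d_is_alghom_diff_law Hfree))
  end.

Lemma diff_law_of_liftingK (x : { l : MDL M T | is_diff_mdl d l }) :
  diff_law_of_lifting (lifting_of_diff_law x) = x.
Proof. destruct x as [l [HL Hdl]]. apply proj1_sig_inj. reflexivity. Qed.

Lemma lifting_of_diff_lawK (y : @Lifting X HX M HM d T HT HA) :
  lifting_of_diff_law (diff_law_of_lifting y) = y.
Proof.
  destruct y as [l [HL [dt [Hder Hdt]]]].
  simpl. apply (f_equal (existT _ l)), (f_equal (existT _ HL)).
  apply proj1_sig_inj. symmetry. apply lifting_eq_lifted_d, Hdt.
Qed.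

End LiftedDifferentialCategory.

Theorem proposition7p15 (X : SMCOps) (M : CMOps X) (d : DerivT M) (T : MOps X)
  (HX : is_additive_smc X) (HM : is_coalg_modality M) (Hd : is_deriving d)
  (HT : is_scm_monad T) (HA : is_additive_functor T) :
  (* (1) and (2) are in bijective correspondence, the bijection keeping the
     underlying mixed distributive law *)
  (exists (F : { l : MDL M T | is_diff_mdl d l } -> @Lifting X HX M HM d T HT HA)
          (G : @Lifting X HX M HM d T HT HA -> { l : MDL M T | is_diff_mdl d l }),
      (forall x, G (F x) = x) /\ (forall y, F (G y) = y) /\
      (forall x, projT1 (F x) = proj1_sig x))
  /\
  (* consequently X^T is a differential category *)
  (forall l : MDL M T, is_diff_mdl d l ->
     exists HL : is_coalg_mdl l,
       is_additive_smc (em_ops HX HT HA) /\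
       is_coalg_modality (lifted_modality HX HM HT HA HL) /\
       exists dt : DerivT (lifted_modality HX HM HT HA HL),
         is_deriving dt /\ (forall a : alg T, proj1_sig (dt a) = d (car a))).
Proof.
  split.
  - exists (@lifting_of_diff_law _ _ _ _ HX HM Hd HT HA),
      (@diff_law_of_lifting _ _ _ _ HX HM Hd HT HA).
    split; [|split].
    + apply diff_law_of_liftingK.
    + apply lifting_of_diff_lawK.
    + intros [l [HL Hdl]]. reflexivity.
  - intros l [HL Hdl].
    exists HL. split; [apply em_ops_additive_smc|]. split; [apply lifted_modality_coalg|].
    pose proof (diff_law_d_is_alghom HX HM Hd HT HL Hdl) as Halg.
    exists (lifted_d Halg). split.
    + apply lifted_d_deriving, Hd.
    + intros a. reflexivity.
Qed.
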